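(* Let $\mathbb{X},\mathbb{X}'\subseteq\mathbb{P}^{k-1}$ be arithmetically Gorenstein sets of $\mathbb{F}_q$-rational points with $\Delta\mathrm{HF}_{\mathbb{X}}=\Delta\mathrm{HF}_{\mathbb{X}'}$ equal to $1,k-1,k-1,1$ in degrees $0,1,2,3$ and $0$ in degrees $\ge4$. Let $L,L'\in P_1$ be linear forms with $L$ vanishing at no point of $\mathbb{X}$ and $L'$ vanishing at no point of $\mathbb{X}'$, and let $\varphi_{\mathbb{X}},\varphi_{\mathbb{X}'}\in\mathcal{D}_{-3}$ be homogeneous elements with $(I_{\mathbb{X}}+\langle L\rangle)^\perp=P\circ\varphi_{\mathbb{X}}$ and $(I_{\mathbb{X}'}+\langle L'\rangle)^\perp=P\circ\varphi_{\mathbb{X}'}$. Let $A\in\mathrm{GL}_k(\mathbb{F}_q)$ satisfy $\lambda_A(L)=L'$. If $\Lambda_A(\mathbb{X})=\mathbb{X}'$, then there is $c\in\mathbb{F}_q\setminus\{0\}$ with $\varphi_{\mathbb{X}'}(\lambda_A(g))=c\,\varphi_{\mathbb{X}}(g)$ for all $g\in P_3$.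
   Context: $P=\mathbb{F}_q[x_1,\dots,x_k]$ standard graded. For a set $\mathbb{X}$ of distinct $\mathbb{F}_q$-rational points of $\mathbb{P}^{k-1}$, $I_{\mathbb{X}}$ is its homogeneous vanishing ideal, $R=P/I_{\mathbb{X}}$, $\mathrm{HF}_{\mathbb{X}}(i)=\dim R_i$ ($0$ for $i<0$), $\Delta\mathrm{HF}_{\mathbb{X}}(i)=\mathrm{HF}_{\mathbb{X}}(i)-\mathrm{HF}_{\mathbb{X}}(i-1)$. $\mathbb{X}$ is arithmetically Gorenstein if $R$ is Gorenstein; then $P/(I_{\mathbb{X}}+\langle L\rangle)$ is an Artinian Gorenstein ring (here with top degree 3). $\mathcal{D}=\bigoplus_j\mathcal{D}_{-j}$, $\mathcal{D}_{-j}=\mathrm{Hom}_{\mathbb{F}_q}(P_j,\mathbb{F}_q)$, is a $P$-module via contraction $(f\circ\psi)(g)=\psi(fg)$; for an ideal $J$, $J^\perp=\{\psi:f\circ\psi=0\ \forall f\in J\}$ and $P\circ\varphi$ is the submodule generated by $\varphi$. For $A\in\mathrm{GL}_k(\mathbb{F}_q)$, $\Lambda_A(p)=Ap$ on $\mathbb{P}^{k-1}$ and $\lambda_A:P\to P$ is the graded automorphism $\lambda_A(f)(v)=f(A^{-1}v)$. *)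

From HB Require Import structures.
From mathcomp Require Import all_boot all_order all_algebra.
From mathcomp Require Import mpoly.

Set Implicit Arguments.
Unset Strict Implicit.
Unset Printing Implicit Defensive.

Import Order.TTheory GRing.Theory.
Local Open Scope ring_scope.

Section Defs.
Variables (F : finFieldType) (k : nat).

(* P = F[x_1..x_k]; points of P^{k-1} are given by representative column vectors. *)
Notation P := {mpoly F[k]}.
Notation pt := 'cV[F]_k.

Definition ev (f : P) (v : pt) : F := f.@[fun i => v i 0].

Definition proj_eq (u v : pt) : Prop := exists c : F, c != 0 /\ u = c *: v.

(* X is a set of distinct F-rational points of P^{k-1}
   (one nonzero representative per point) *)
Definition point_set (X : {set pt}) : Prop :=
  (forall v, v \in X -> v != 0) /\
  (forall u v, u \in X -> v \in X -> proj_eq u v -> u = v).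

(* membership in the homogeneous vanishing ideal I_X:
   every homogeneous component of f vanishes at every point of X *)
Definition inIX (X : {set pt}) (f : P) : Prop :=
  forall (d : nat) (v : pt), v \in X -> ev (pihomog mdeg d f) v = 0.

Definition inIXL (X : {set pt}) (L : P) (f : P) : Prop :=
  exists a b : P, inIX X a /\ f = a + L * b.

(* dim_F (R_i) = n where R = P / I_X, i.e. dim_F (P_i / (I_X)_i) = n:
   there is a family of n elements of P_i which is a basis modulo (I_X)_i *)
Definition HF_is (X : {set pt}) (i n : nat) : Prop :=
  exists v : 'I_n -> P,
    (forall j, v j \is i.-homog) /\
    (forall c : 'I_n -> F, inIX X (\sum_(j < n) c j *: v j) -> forall j, c j = 0) /\
    (forall f : P, f \is i.-homog ->
       exists c : 'I_n -> F, inIX X (f - \sum_(j < n) c j *: v j)).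

Definition delta_pattern (i : nat) : int :=
  match i with
  | 0 => 1
  | 1 => (k%:Z - 1)
  | 2 => (k%:Z - 1)
  | 3 => 1
  | _ => 0
  end.

Definition DeltaHF_is_pattern (X : {set pt}) : Prop :=
  exists h : nat -> nat,
    (forall i, HF_is X i (h i)) /\
    (forall i, (h i)%:Z - (if i is j.+1 then (h j)%:Z else 0) = delta_pattern i).

(* socle of the Artinian ring P/J, J given by a membership predicate, is
   one-dimensional over F *)
Definition socle_dim1 (J : P -> Prop) : Prop :=
  exists s : P, ~ J s /\ (forall i : 'I_k, J ('X_i * s)) /\
    (forall f : P, (forall i : 'I_k, J ('X_i * f)) ->
       exists c : F, J (f - c *: s)).

Definition arith_gorenstein (X : {set pt}) : Prop :=
  forall L : P, L \is 1.-homog -> (forall v, v \in X -> ev L v != 0) ->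
    socle_dim1 (inIXL X L).

(* the graded dual D = (+)_j D_{-j}, elements seen as linear functionals on P
   vanishing on P_d for d large; D_{-j}: functionals supported on P_j *)
Definition lin_functional (psi : P -> F) : Prop :=
  forall (a : F) (f g : P), psi (a *: f + g) = a * psi f + psi g.

Definition inD (psi : P -> F) : Prop :=
  lin_functional psi /\
  exists N : nat, forall (d : nat) (g : P), (N <= d)%N -> g \is d.-homog -> psi g = 0.

Definition inD_deg (j : nat) (psi : P -> F) : Prop :=
  lin_functional psi /\
  forall (d : nat) (g : P), d != j -> g \is d.-homog -> psi g = 0.

Definition contr (f : P) (psi : P -> F) : P -> F := fun g => psi (f * g).

Definition in_perp (J : P -> Prop) (psi : P -> F) : Prop :=
  forall f : P, J f -> forall g : P, contr f psi g = 0.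

Definition perp_generated_by (J : P -> Prop) (phi : P -> F) : Prop :=
  forall psi : P -> F, inD psi ->
    (in_perp J psi <-> exists f : P, forall g : P, psi g = contr f phi g).

(* lambda_A(f)(v) = f(A^{-1} v) *)
Definition lambdaA (A : 'M[F]_k) (f : P) : P :=
  f \mPo [tuple \sum_(j < k) (invmx A) i j *: 'X_j | i < k].

Definition LambdaA_maps (A : 'M[F]_k) (X X' : {set pt}) : Prop :=
  (forall u, u \in X -> exists v, v \in X' /\ proj_eq (A *m u) v) /\
  (forall v, v \in X' -> exists u, u \in X /\ proj_eq (A *m u) v).

End Defs.

(* The functional psi := phi' o lambda_A kills I_X + <L>, since lambda_A maps
   I_X into I_X' and L to L'.  As phi generates (I_X + <L>)^perp, psi = f o phi
   for some f, and in degree 3 this is f(0) phi.  The scalar f(0) cannot vanish: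
   otherwise phi' would vanish in degree 3 (lambda_A is onto P_3), hence
   everywhere, while (I_X' + <L'>)^perp contains the nonzero functional
   g |-> g(0), because X' is nonempty (HF_X'(0) = 1) and L' has no constant term. *)

From HB Require Import structures.
From mathcomp Require Import all_boot all_order all_algebra.
From mathcomp Require Import mpoly.

Set Implicit Arguments.
Unset Strict Implicit.
Unset Printing Implicit Defensive.

Import GRing.Theory.
Local Open Scope ring_scope.

Section HomogeneousComposition.
Variables (R : comNzRingType) (n m : nat).
Implicit Types (p : {mpoly R[n]}) (t : n.-tuple {mpoly R[m]}).

Lemma dhomog_comp_mpoly t d p :
  (forall i, tnth t i \is 1.-homog) -> p \is d.-homog -> p \mPo t \is d.-homog.
Proof.
move=> ht /dhomogP hp; rewrite comp_mpolyEX big_seq; apply: rpred_sum => mu mu_p.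
apply: rpredZ; rewrite comp_mpolyX.
have -> : d = (\sum_i mu i)%N by rewrite -(hp mu mu_p); exact: mdegE.
elim/big_rec2: _ => [|i q s _ hq]; first exact: dhomog1.
have -> : (mu i + s = 1 * mu i + s)%N by rewrite mul1n.
by apply: dhomogM => //; apply: dhomogMn.
Qed.

Lemma pihomog_comp_mpoly t d p :
  (forall i, tnth t i \is 1.-homog) ->
  pihomog mdeg d (p \mPo t) = pihomog mdeg d p \mPo t.
Proof.
move=> ht; elim/mpolyind: p => [|c mu p _ _ IHp]; first by rewrite !linear0.
rewrite !linearP /= {}IHp; congr (c *: _ + _).
have hX : 'X_[mu] \mPo t \is (mdeg mu).-homog.
  by apply: dhomog_comp_mpoly => //; rewrite dhomogX.
have [<-|ne] := eqVneq (mdeg mu) d.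
  by rewrite !pihomog_dE ?dhomogX.
by rewrite (pihomog_ne0 ne hX) (pihomog_ne0 ne) ?linear0 ?dhomogX.
Qed.

Lemma comp_mpolyA (l : nat) p t (s : m.-tuple {mpoly R[l]}) :
  (p \mPo t) \mPo s = p \mPo [tuple tnth t i \mPo s | i < n].
Proof.
rewrite [p \mPo t]comp_mpolyEX [RHS]comp_mpolyEX raddf_sum /=.
apply: eq_bigr => mu _; rewrite comp_mpolyZ !comp_mpolyX rmorph_prod /=.
by congr (_ *: _); apply: eq_bigr => i _; rewrite rmorphXn tnth_mktuple.
Qed.

End HomogeneousComposition.

Section HomogeneousComponents.
Variables (R : comNzRingType) (n : nat).
Implicit Types (p f g : {mpoly R[n]}).

Lemma meval_homog_scale d p c (w : 'I_n -> R) : p \is d.-homog ->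
  p.@[fun i => c * w i] = c ^+ d * p.@[w].
Proof.
move=> /dhomogP hp; rewrite !mevalE mulr_sumr big_seq [RHS]big_seq.
apply: eq_bigr => mu mu_p; under eq_bigr do rewrite exprMn.
by rewrite big_split /= prodrXr -mdegE hp // mulrCA.
Qed.

Lemma pihomog0_mpolyC p : pihomog mdeg 0 p = (p@_0)%:MP.
Proof.
have p0 : (pihomog mdeg 0 p)@_0 = p@_0.
  rewrite {2}(@pihomog_partitionE _ _ mdeg (msize p).+1 p) //.
  rewrite [RHS]raddf_sum /= (bigD1 ord0) //= big1 ?addr0 // => d d_neq0.
  by apply: (dhomog_nemf_coeff (pihomogP _ _ _)); rewrite mf0 eq_sym.
rewrite -p0; apply: msize1_polyC; rewrite mmeasureE big_seq.
elim/big_rec: _ => // mu s mu_p s_le1; rewrite geq_max s_le1 andbT.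
by rewrite (dhomog_mf (pihomogP _ _ _) mu_p).
Qed.

Lemma pihomog_mulr_homog d e f g : g \is d.-homog ->
  pihomog mdeg (e + d) (f * g) = pihomog mdeg e f * g.
Proof.
move=> hg; have e_lt : (e < maxn (msize f) e.+1)%N by rewrite leq_maxr.
rewrite {1}(@pihomog_partitionE _ _ mdeg _ f (leq_maxl _ e.+1)).
rewrite mulr_suml raddf_sum (bigD1 (Ordinal e_lt)) //= big1 ?addr0.
  by rewrite pihomog_dE //; apply: dhomogM => //; apply: pihomogP.
move=> i /eqP ne; apply: (@pihomog_ne0 _ _ _ (i + d)%N).
  by rewrite eqn_add2r; apply/eqP => ie; apply: ne; apply: val_inj.
by apply: dhomogM => //; apply: pihomogP.
Qed.

End HomogeneousComponents.

Section LinearSubstitution.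
Variables (R : comUnitRingType) (k : nat).

Definition linsubst (M : 'M[R]_k) : k.-tuple {mpoly R[k]} :=
  [tuple \sum_(j < k) M i j *: 'X_j | i < k].

Lemma linsubst_homog M i : tnth (linsubst M) i \is 1.-homog.
Proof.
rewrite tnth_mktuple; apply: rpred_sum => j _; apply: rpredZ.
by rewrite dhomogX /= mdeg1.
Qed.

Lemma linsubst_mul M N :
  [tuple tnth (linsubst M) i \mPo linsubst N | i < k] = linsubst (M *m N).
Proof.
apply: eq_from_tnth => i; rewrite !tnth_mktuple raddf_sum /=.
under eq_bigr do rewrite comp_mpolyZ comp_mpolyXU -tnth_nth tnth_mktuple scaler_sumr.
rewrite exchange_big /=; apply: eq_bigr => l _.
by rewrite mxE scaler_suml; apply: eq_bigr => j _; rewrite scalerA.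
Qed.

Lemma linsubst1 : linsubst 1%:M = [tuple 'X_i | i < k].
Proof.
apply: eq_from_tnth => i; rewrite !tnth_mktuple (bigD1 i) //= big1 ?addr0.
  by rewrite mxE eqxx scale1r.
by move=> j /negbTE ji; rewrite mxE eq_sym ji scale0r.
Qed.

Lemma comp_linsubstK M p : M \in unitmx ->
  (p \mPo linsubst M) \mPo linsubst (invmx M) = p.
Proof.
by move=> uM; rewrite comp_mpolyA linsubst_mul mulmxV // linsubst1 comp_mpoly_id.
Qed.

Lemma meval_linsubst M p (v : 'cV[R]_k) :
  (p \mPo linsubst M).@[fun i => v i 0] = p.@[fun i => (M *m v) i 0].
Proof.
rewrite comp_mpoly_meval; apply: meval_eq => i.
rewrite tnth_mktuple raddf_sum mxE /=; apply: eq_bigr => j _.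
by rewrite mevalZ mevalXU.
Qed.

End LinearSubstitution.

Section Functionals.
Variables (F : finFieldType) (k : nat).
Local Notation P := {mpoly F[k]}.
Implicit Types (phi psi : P -> F) (J : P -> Prop).

Section LinearFunctional.
Variables (phi : P -> F) (phi_lin : lin_functional phi).

Lemma lin_functional0 : phi 0 = 0.
Proof.
have := phi_lin 1 0 0; rewrite scale1r addr0 mul1r.
by move/(congr1 (fun x => x - phi 0)); rewrite /= addrK subrr => ->.
Qed.

Lemma lin_functionalD f g : phi (f + g) = phi f + phi g.
Proof. by rewrite -[f]scale1r phi_lin mul1r scale1r. Qed.

Lemma lin_functionalZ a f : phi (a *: f) = a * phi f.
Proof. by rewrite -[a *: f]addr0 phi_lin lin_functional0 addr0. Qed.

Lemma lin_functional_sum (I : Type) (r : seq I) (G : I -> P) :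
  phi (\sum_(i <- r) G i) = \sum_(i <- r) phi (G i).
Proof.
elim/big_rec2: _ => [|i y1 y2 _ <-]; first exact: lin_functional0.
exact: lin_functionalD.
Qed.

End LinearFunctional.

Lemma inD_deg_pihomog d phi g : inD_deg d phi -> phi g = phi (pihomog mdeg d g).
Proof.
move=> [phi_lin phi_d]; have d_lt : (d < maxn (msize g) d.+1)%N by rewrite leq_maxr.
rewrite {1}(@pihomog_partitionE _ _ mdeg _ g (leq_maxl _ d.+1)).
rewrite lin_functional_sum // (bigD1 (Ordinal d_lt)) //= big1 ?addr0 // => i ne.
apply: (phi_d i); last exact: pihomogP.
by apply: contra ne => /eqP id; apply/eqP/val_inj.
Qed.

Lemma inD_deg_inD d phi : inD_deg d phi -> inD phi.
Proof.
move=> [phi_lin phi_d]; split=> //; exists d.+1 => e g de; apply: phi_d.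
by rewrite neq_ltn de orbT.
Qed.

Lemma inD_deg_comp_mpoly d phi (t : k.-tuple P) :
  (forall i, tnth t i \is 1.-homog) -> inD_deg d phi ->
  inD_deg d (fun g => phi (g \mPo t)).
Proof.
move=> ht [phi_lin phi_d]; split.
  by move=> a f g; rewrite comp_mpolyD comp_mpolyZ.
by move=> e g de hg; apply: phi_d de _; apply: dhomog_comp_mpoly.
Qed.

Lemma inD_mcoeff0 : inD (fun g : P => g@_0).
Proof.
split; first by move=> a f g; rewrite mcoeffD mcoeffZ.
exists 1%N => d g d_gt0 hg; apply: (dhomog_nemf_coeff hg).
by rewrite mf0 eq_sym -lt0n.
Qed.

Lemma perp_generator_in_perp J phi :
  perp_generated_by J phi -> inD phi -> in_perp J phi.
Proof. by move=> gen phiD; apply/gen => //; exists 1 => g; rewrite /contr mul1r. Qed.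

Lemma in_perp_homog_multiple d J phi psi :
  perp_generated_by J phi -> inD_deg d phi -> inD psi -> in_perp J psi ->
  exists c, forall g, g \is d.-homog -> psi g = c * phi g.
Proof.
move=> gen phi_d psiD /(gen _ psiD) [f psi_f]; exists f@_0 => g hg.
rewrite psi_f /contr (inD_deg_pihomog _ phi_d) -[d]add0n pihomog_mulr_homog //.
by rewrite pihomog0_mpolyC mul_mpolyC lin_functionalZ //; case: phi_d.
Qed.

Lemma perp_generator_neq0 J phi :
  perp_generated_by J phi -> in_perp J (fun g => g@_0) -> ~ (forall g, phi g = 0).
Proof.
move=> gen perp0 phi0.
have [f f1] := proj1 (gen _ inD_mcoeff0) perp0.
by have /eqP := f1 1; rewrite mcoeff1 eqxx /contr phi0 oner_eq0.
Qed.

Lemma inIX_mcoeff0 (X : {set 'cV[F]_k}) v a : v \in X -> inIX X a -> a@_0 = 0.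
Proof.
by move=> vX /(_ 0%N v vX); rewrite pihomog0_mpolyC /ev mevalC.
Qed.

Lemma mcoeff0_in_perp_IXL (X : {set 'cV[F]_k}) v L d :
  v \in X -> L \is d.-homog -> (0 < d)%N -> in_perp (inIXL X L) (fun g => g@_0).
Proof.
move=> vX hL d_gt0 _ [a [b [ha ->]]] g; rewrite /contr !rmorphM rmorphD rmorphM /=.
rewrite (inIX_mcoeff0 vX ha) (dhomog_nemf_coeff hL) ?mf0 1?eq_sym -?lt0n //.
by rewrite mul0r add0r mul0r.
Qed.

Lemma HF_is_nonempty (X : {set 'cV[F]_k}) i n : HF_is X i n -> (0 < n)%N ->
  exists v, v \in X.
Proof.
move=> [w [_ [w_free _]]] n_gt0; case: (set_0Vmem X) => [X0|[v vX]]; last by exists v.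
have : inIX X (\sum_(j < n) (fun _ => 1) j *: w j) by move=> d v; rewrite X0 inE.
by move/w_free/(_ (Ordinal n_gt0))/eqP; rewrite oner_eq0.
Qed.

Lemma DeltaHF_is_pattern_HF0 (X : {set 'cV[F]_k}) :
  DeltaHF_is_pattern X -> HF_is X 0 1.
Proof.
move=> [h [hHF hD]]; have := hD 0%N; rewrite /delta_pattern subr0 => -[h0].
by rewrite -h0.
Qed.

Section ProjectiveTransformation.
Variables (A : 'M[F]_k) (X X' : {set 'cV[F]_k}).
Hypotheses (A_unit : A \in unitmx) (A_maps : LambdaA_maps A X X').

(* For v in X', A^-1 v = c^-1 u for some u in X, and the homogeneous
   components of a absorb the scalar. *)
Lemma inIX_lambdaA a : inIX X a -> inIX X' (lambdaA A a).
Proof.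
move=> ha d v vX'; have [u [uX [c [c_neq0 Au]]]] := A_maps.2 v vX'.
have Av : invmx A *m v = c^-1 *: u.
  by rewrite -[u](mulKmx A_unit) Au scalemxAr scalerA mulVf // scale1r.
rewrite /lambdaA pihomog_comp_mpoly; last exact: linsubst_homog.
rewrite /ev meval_linsubst Av (meval_eq (v2 := fun i => c^-1 * u i 0)).
  by rewrite (meval_homog_scale _ _ (pihomogP _ _ _)) [_.@[_]](ha d u uX) mulr0.
by move=> i; rewrite mxE.
Qed.

Lemma inIXL_lambdaA L f : inIXL X L f -> inIXL X' (lambdaA A L) (lambdaA A f).
Proof.
move=> [a [b [ha ->]]]; exists (lambdaA A a), (lambdaA A b); split.
  exact: inIX_lambdaA.
by rewrite /lambdaA rmorphD rmorphM.
Qed.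

Lemma in_perp_lambdaA L psi : in_perp (inIXL X' (lambdaA A L)) psi ->
  in_perp (inIXL X L) (fun g => psi (lambdaA A g)).
Proof.
move=> perp f /inIXL_lambdaA Jf g; rewrite /contr /lambdaA rmorphM.
exact: perp.
Qed.

End ProjectiveTransformation.

End Functionals.

Theorem proposition9p1 (F : finFieldType) (k : nat)
  (X X' : {set 'cV[F]_k}) (L L' : {mpoly F[k]})
  (phi phi' : {mpoly F[k]} -> F) (A : 'M[F]_k) :
  point_set X -> point_set X' ->
  arith_gorenstein X -> arith_gorenstein X' ->
  DeltaHF_is_pattern X -> DeltaHF_is_pattern X' ->
  L \is 1.-homog -> L' \is 1.-homog ->
  (forall v, v \in X -> ev L v != 0) ->
  (forall v, v \in X' -> ev L' v != 0) ->
  inD_deg 3 phi -> inD_deg 3 phi' ->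
  perp_generated_by (inIXL X L) phi ->
  perp_generated_by (inIXL X' L') phi' ->
  A \in unitmx ->
  lambdaA A L = L' ->
  LambdaA_maps A X X' ->
  exists c : F, c != 0 /\
    forall g : {mpoly F[k]}, g \is 3.-homog -> phi' (lambdaA A g) = c * phi g.
Proof.
move=> _ _ _ _ _ /DeltaHF_is_pattern_HF0 HF0' _ L'_homog _ _ phi3 phi'3 gen gen'
  A_unit LL' A_maps.
have psi_D : inD (fun g => phi' (lambdaA A g)).
  exact/inD_deg_inD/(inD_deg_comp_mpoly (@linsubst_homog _ _ _) phi'3).
have psi_perp : in_perp (inIXL X L) (fun g => phi' (lambdaA A g)).
  apply: (in_perp_lambdaA A_unit A_maps); rewrite LL'.
  exact/(perp_generator_in_perp gen')/(inD_deg_inD phi'3).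
have [c psi_c] := in_perp_homog_multiple gen phi3 psi_D psi_perp.
exists c; split=> //; apply/eqP => c0.
have [v0 v0X'] := HF_is_nonempty HF0' (ltn0Sn 0).
apply: (perp_generator_neq0 gen' (mcoeff0_in_perp_IXL v0X' L'_homog (ltn0Sn 0))).
move=> g; rewrite (inD_deg_pihomog g phi'3).
have g3 := pihomogP mdeg 3 g.
rewrite -(comp_linsubstK (pihomog mdeg 3 g) A_unit) [phi' _]psi_c ?c0 ?mul0r //.
exact: dhomog_comp_mpoly (@linsubst_homog _ _ _) g3.
Qed.
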